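(* Let $\mathfrak{p}$ be a prime ideal in a pc monoid $A$. Then: (1) $A/\mathfrak{p}$ is a cancellative monoid; (2) if $A$ is pctf, then $(A/\mathfrak{p})^+$ is a torsionfree pointed group; (3) if $A$ is cancellative and normal, then $A/\mathfrak{p}$ is cancellative and normal.
   Context: A monoid is a pointed commutative monoid (basepoint $0$, $0\cdot a=0$, identity $1$). An ideal is a subset $I\ni0$ with $AI\subseteq I$; $A/I$ collapses $I$ to $0$; a proper ideal $\mathfrak{p}$ is prime if $A\setminus\mathfrak{p}$ is multiplicatively closed. $A$ is cancellative if $ac=bc$ with $c\ne0$ implies $a=b$; pc if $A\cong C/I$ with $C$ cancellative; pctf if $A\cong C/I$ with $C$ cancellative and torsionfree ($a^n=b^n$ for some $n\ge1$ implies $a=b$). For cancellative $C$, the pointed group completion $C^+$ is the group completion of $C\setminus\{0\}$ with a basepoint adjoined; a pointed group is torsionfree if its underlying group (without basepoint) is. The normalization of a cancellative $A$ is $A_{\mathrm{nor}}=\{\alpha\in A^+:\alpha^n\in A\text{ for some }n\ge1\}$ and $A$ is normal if $A=A_{\mathrm{nor}}$. *)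

From Stdlib Require Import Classical ClassicalDescription ProofIrrelevance Arith.

Record PMonoid := {
  car :> Type;
  pmul : car -> car -> car;
  pone : car;
  pzero : car;
  pmul_assoc : forall a b c, pmul a (pmul b c) = pmul (pmul a b) c;
  pmul_comm : forall a b, pmul a b = pmul b a;
  pmul_one : forall a, pmul pone a = a;
  pmul_zero : forall a, pmul pzero a = pzero
}.

Arguments pmul {_} _ _.
Arguments pone {_}.
Arguments pzero {_}.

Definition ppow {A : PMonoid} (a : A) (n : nat) : A := Nat.iter n (pmul a) pone.

Record Ideal (A : PMonoid) := {
  ideal_pred :> A -> Prop;
  ideal_zero : ideal_pred pzero;
  ideal_mul : forall a x, ideal_pred x -> ideal_pred (pmul a x)
}.

Definition prime_ideal {A : PMonoid} (p : Ideal A) : Prop :=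
  (exists a : A, ~ p a) /\
  (forall a b : A, ~ p a -> ~ p b -> ~ p (pmul a b)).

(* Quotient A/I: collapse I to 0.  Elements: 0 and the elements outside I. *)
Definition qcar {A : PMonoid} (I : Ideal A) : Type :=
  { a : A | a = pzero \/ ~ I a }.

Definition qproj {A : PMonoid} (I : Ideal A) (a : A) : qcar I :=
  match excluded_middle_informative (I a) with
  | left _ => exist _ pzero (or_introl eq_refl)
  | right h => exist _ a (or_intror h)
  end.

Definition qmul {A : PMonoid} (I : Ideal A) (x y : qcar I) : qcar I :=
  qproj I (pmul (proj1_sig x) (proj1_sig y)).

Lemma qcar_eq {A : PMonoid} (I : Ideal A) (x y : qcar I) :
  proj1_sig x = proj1_sig y -> x = y.
Proof.
  destruct x as [x hx], y as [y hy]; simpl; intros ->.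
  f_equal; apply proof_irrelevance.
Qed.

Lemma qproj_val {A : PMonoid} (I : Ideal A) (a : A) :
  proj1_sig (qproj I a) = (if excluded_middle_informative (I a) then pzero else a).
Proof. unfold qproj; destruct (excluded_middle_informative (I a)); reflexivity. Qed.

Lemma qproj_in {A : PMonoid} (I : Ideal A) (a : A) :
  I (proj1_sig (qproj I a)) <-> I a.
Proof.
  rewrite qproj_val; destruct (excluded_middle_informative (I a)) as [h|h];
  split; intro; auto; apply ideal_zero.
Qed.

Lemma qmul_val {A : PMonoid} (I : Ideal A) (x y : qcar I) :
  proj1_sig (qmul I x y) =
  (if excluded_middle_informative (I (pmul (proj1_sig x) (proj1_sig y)))
   then pzero else pmul (proj1_sig x) (proj1_sig y)).
Proof. apply qproj_val. Qed.

Lemma q_assoc {A : PMonoid} (I : Ideal A) (x y z : qcar I) :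
  qmul I x (qmul I y z) = qmul I (qmul I x y) z.
Proof.
  apply qcar_eq; rewrite !qmul_val.
  destruct x as [x hx], y as [y hy], z as [z hz]; simpl.
  destruct (excluded_middle_informative (I (pmul y z))) as [h1|h1];
  destruct (excluded_middle_informative (I (pmul x y))) as [h2|h2].
  - rewrite (pmul_comm _ x pzero), !pmul_zero.
    destruct (excluded_middle_informative (I pzero)); reflexivity.
  - rewrite (pmul_comm _ x pzero), pmul_zero.
    destruct (excluded_middle_informative (I pzero)) as [_|n]; [|now destruct n; apply ideal_zero].
    destruct (excluded_middle_informative (I (pmul (pmul x y) z))) as [|n]; auto.
    destruct n; rewrite <- pmul_assoc; now apply ideal_mul.
  - rewrite pmul_zero.
    destruct (excluded_middle_informative (I pzero)) as [_|n]; [|now destruct n; apply ideal_zero].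
    destruct (excluded_middle_informative (I (pmul x (pmul y z)))) as [|n]; auto.
    destruct n; rewrite pmul_assoc, pmul_comm; now apply ideal_mul.
  - rewrite pmul_assoc; reflexivity.
Qed.

Lemma q_comm {A : PMonoid} (I : Ideal A) (x y : qcar I) : qmul I x y = qmul I y x.
Proof. unfold qmul; rewrite pmul_comm; reflexivity. Qed.

Definition qone {A : PMonoid} (I : Ideal A) : qcar I := qproj I pone.
Definition qzero {A : PMonoid} (I : Ideal A) : qcar I :=
  exist _ pzero (or_introl eq_refl).

Lemma q_one {A : PMonoid} (I : Ideal A) (x : qcar I) : qmul I (qone I) x = x.
Proof.
  apply qcar_eq; rewrite qmul_val; unfold qone; rewrite qproj_val.
  destruct x as [x hx]; simpl.
  destruct (excluded_middle_informative (I pone)) as [h|h].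
  - rewrite pmul_zero.
    destruct (excluded_middle_informative (I pzero)) as [_|n];
      [|now destruct n; apply ideal_zero].
    destruct hx as [->|hx]; auto.
    exfalso; apply hx; rewrite <- (pmul_one _ x), pmul_comm; now apply ideal_mul.
  - rewrite pmul_one; destruct (excluded_middle_informative (I x)); auto.
    destruct hx as [->|hx]; auto; contradiction.
Qed.

Lemma q_zero {A : PMonoid} (I : Ideal A) (x : qcar I) : qmul I (qzero I) x = qzero I.
Proof.
  apply qcar_eq; rewrite qmul_val; simpl; rewrite pmul_zero.
  destruct (excluded_middle_informative (I pzero)); reflexivity.
Qed.

Definition quot (A : PMonoid) (I : Ideal A) : PMonoid :=
  {| car := qcar I; pmul := qmul I; pone := qone I; pzero := qzero I;
     pmul_assoc := q_assoc I; pmul_comm := q_comm I;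
     pmul_one := q_one I; pmul_zero := q_zero I |}.

Definition pm_iso (A B : PMonoid) : Prop :=
  exists f : A -> B,
    (forall x y, f x = f y -> x = y) /\ (forall y, exists x, f x = y) /\
    f pone = pone /\ f pzero = pzero /\
    (forall a b, f (pmul a b) = pmul (f a) (f b)).

Definition cancellative (A : PMonoid) : Prop :=
  forall a b c : A, pmul a c = pmul b c -> c <> pzero -> a = b.

Definition torsionfree (A : PMonoid) : Prop :=
  forall (a b : A) (n : nat), 0 < n -> ppow a n = ppow b n -> a = b.

Definition pc (A : PMonoid) : Prop :=
  exists (C : PMonoid) (I : Ideal C), cancellative C /\ pm_iso A (quot C I).

Definition pctf (A : PMonoid) : Prop :=
  exists (C : PMonoid) (I : Ideal C),
    cancellative C /\ torsionfree C /\ pm_iso A (quot C I).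

(* Pointed group completion A^+ (for cancellative A): its group part is the
   group of fractions a/b with a, b in A \ {0}, represented by pairs (a, b)
   modulo (a,b) ~ (c,d) iff a d = c b; the basepoint is adjoined separately. *)
Definition gc_el {A : PMonoid} (x : A * A) : Prop :=
  fst x <> pzero /\ snd x <> pzero.
Definition gc_eq {A : PMonoid} (x y : A * A) : Prop :=
  pmul (fst x) (snd y) = pmul (fst y) (snd x).
Definition gc_mul {A : PMonoid} (x y : A * A) : A * A :=
  (pmul (fst x) (fst y), pmul (snd x) (snd y)).
Definition gc_one {A : PMonoid} : A * A := (pone, pone).
Definition gc_pow {A : PMonoid} (x : A * A) (n : nat) : A * A :=
  Nat.iter n (gc_mul x) gc_one.
Definition gc_of {A : PMonoid} (a : A) : A * A := (a, pone).

Definition completion_torsionfree (A : PMonoid) : Prop :=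
  forall (x : A * A) (n : nat), gc_el x -> 0 < n ->
    gc_eq (gc_pow x n) gc_one -> gc_eq x gc_one.

Definition gc_in_A {A : PMonoid} (x : A * A) : Prop :=
  exists a : A, a <> pzero /\ gc_eq x (gc_of a).

(* normalization A_nor = {alpha in A^+ : alpha^n in A for some n >= 1};
   A normal iff A = A_nor (the basepoint is trivially in both). *)
Definition in_normalization {A : PMonoid} (x : A * A) : Prop :=
  gc_el x /\ exists n : nat, 0 < n /\ gc_in_A (gc_pow x n).

Definition normal (A : PMonoid) : Prop :=
  forall x : A * A, in_normalization x -> gc_in_A x.

(* Since p is prime, the nonzero elements of A/p are the elements of A outside p,
   and they multiply exactly as in A; so A/p has no zero divisors, and any
   cancellation or root-extraction that holds in A for products outside p holds
   in A/p.  A pc monoid C/I cancels whenever the product is nonzero, because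
   such a product is computed in the cancellative C (and likewise for roots when
   C is torsionfree); for a monoid without zero divisors this is full
   cancellativity (resp. torsionfreeness of the completion).  Normality descends
   because if an element a outside p is d b in A, then d lies outside p too. *)

From Stdlib Require Import Classical ClassicalDescription.

Lemma pmul_one_r (A : PMonoid) (a : A) : pmul a pone = a.
Proof. rewrite pmul_comm; apply pmul_one. Qed.

Lemma pmul_zero_r (A : PMonoid) (a : A) : pmul a pzero = pzero.
Proof. rewrite pmul_comm; apply pmul_zero. Qed.

Lemma pmul_hom_ppow (A B : PMonoid) (f : A -> B) :
  f pone = pone -> (forall a b, f (pmul a b) = pmul (f a) (f b)) ->
  forall a n, f (ppow a n) = ppow (f a) n.
Proof.
  intros f1 fm a n; induction n as [|n IH]; [exact f1|].
  change (f (pmul a (ppow a n)) = pmul (f a) (ppow (f a) n)).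
  now rewrite fm, IH.
Qed.

Definition integral (A : PMonoid) : Prop :=
  forall a b : A, a <> pzero -> b <> pzero -> pmul a b <> pzero.

Definition cancellative_off_zero (A : PMonoid) : Prop :=
  forall a b c : A, pmul a c = pmul b c -> pmul a c <> pzero -> a = b.

Definition unique_roots_off_zero (A : PMonoid) : Prop :=
  forall (a b : A) (n : nat), 0 < n -> ppow a n = ppow b n -> ppow a n <> pzero -> a = b.

Lemma ppow_neq0 (A : PMonoid) : integral A ->
  forall (a : A) n, a <> pzero -> ppow a n <> pzero.
Proof.
  intros hA a n ha; induction n as [|n IH].
  - intro h1; apply ha; rewrite <- (pmul_one _ a).
    change (pmul (ppow a 0) a = pzero); now rewrite h1, pmul_zero.
  - exact (hA _ _ ha IH).
Qed.

Lemma cancellative_off_zero_of_cancellative (A : PMonoid) :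
  cancellative A -> cancellative_off_zero A.
Proof.
  intros hA a b c e nz; apply (hA _ _ _ e).
  intros ->; apply nz, pmul_zero_r.
Qed.

Lemma unique_roots_off_zero_of_torsionfree (A : PMonoid) :
  torsionfree A -> unique_roots_off_zero A.
Proof. intros hA a b n hn e _; exact (hA _ _ _ hn e). Qed.

Lemma cancellative_of_integral (A : PMonoid) :
  integral A -> cancellative_off_zero A -> cancellative A.
Proof.
  intros hint hcan a b c e hc.
  destruct (classic (pmul a c = pzero)) as [h0|h0]; [|exact (hcan _ _ _ e h0)].
  assert (annihilated : forall x : A, pmul x c = pzero -> x = pzero).
  { intros x hx; apply NNPP; intro nx; exact (hint _ _ nx hc hx). }
  rewrite (annihilated a h0), (annihilated b); congruence.
Qed.

Lemma gc_pow_pair (A : PMonoid) (x : A * A) n :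
  gc_pow x n = (ppow (fst x) n, ppow (snd x) n).
Proof.
  induction n as [|n IH]; [reflexivity|].
  change (gc_mul x (gc_pow x n) = (ppow (fst x) (S n), ppow (snd x) (S n))).
  now rewrite IH.
Qed.

Lemma gc_eq_one_iff (A : PMonoid) (x : A * A) : gc_eq x gc_one <-> fst x = snd x.
Proof. unfold gc_eq, gc_one; simpl; rewrite pmul_one_r, pmul_one; reflexivity. Qed.

Lemma gc_eq_of_iff (A : PMonoid) (x : A * A) (a : A) :
  gc_eq x (gc_of a) <-> fst x = pmul a (snd x).
Proof. unfold gc_eq, gc_of; simpl; rewrite pmul_one_r; reflexivity. Qed.

Lemma completion_torsionfree_of_integral (A : PMonoid) :
  integral A -> unique_roots_off_zero A -> completion_torsionfree A.
Proof.
  intros hint hroot [a b] n [ha hb] hn e; simpl in ha, hb.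
  rewrite gc_pow_pair, gc_eq_one_iff in e; simpl in e.
  apply gc_eq_one_iff; simpl.
  exact (hroot _ _ _ hn e (ppow_neq0 _ hint _ _ ha)).
Qed.

Section Quotient.
Variable A : PMonoid.
Variable I : Ideal A.

Lemma qval_eq0 (x : quot A I) : proj1_sig x = pzero <-> x = pzero.
Proof. split; [intro h; apply qcar_eq, h | now intros ->]. Qed.

Lemma qval_neq0 (x : quot A I) : x <> pzero -> proj1_sig x <> pzero.
Proof. intros hx h; apply hx, qval_eq0, h. Qed.

Lemma qval_notin (x : quot A I) : x <> pzero -> ~ I (proj1_sig x).
Proof.
  destruct x as [v [hv|hv]]; intro hx; [|exact hv].
  exfalso; apply hx, qcar_eq; exact hv.
Qed.

Lemma qval_pmul_neq0 (x y : quot A I) :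
  pmul x y <> pzero -> proj1_sig (pmul x y) = pmul (proj1_sig x) (proj1_sig y).
Proof.
  intro hxy; change (proj1_sig (qmul I x y) = pmul (proj1_sig x) (proj1_sig y)).
  rewrite qmul_val; destruct (excluded_middle_informative _); [|reflexivity].
  exfalso; apply hxy, qcar_eq; change (proj1_sig (qmul I x y) = pzero).
  rewrite qmul_val; destruct (excluded_middle_informative _); [reflexivity|contradiction].
Qed.

Lemma qval_ppow_neq0 (x : quot A I) n :
  ppow x n <> pzero -> proj1_sig (ppow x n) = ppow (proj1_sig x) n.
Proof.
  induction n as [|n IH]; intro hxn.
  - change (proj1_sig (qproj I pone) = pone); rewrite qproj_val.
    destruct (excluded_middle_informative (I pone)) as [h1|]; [|reflexivity].
    exfalso; apply hxn, qcar_eq; change (proj1_sig (qproj I pone) = pzero).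
    rewrite qproj_val; destruct (excluded_middle_informative (I pone)); easy.
  - change (pmul x (ppow x n) <> pzero) in hxn.
    change (proj1_sig (pmul x (ppow x n)) = pmul (proj1_sig x) (ppow (proj1_sig x) n)).
    rewrite qval_pmul_neq0, IH; [reflexivity|..|exact hxn].
    intro h0; apply hxn; rewrite h0; apply pmul_zero_r.
Qed.

Lemma quot_cancellative_off_zero :
  cancellative_off_zero A -> cancellative_off_zero (quot A I).
Proof.
  intros hA a b c e nz.
  assert (nz' : pmul b c <> pzero) by (rewrite <- e; exact nz).
  apply qcar_eq, (hA _ _ (proj1_sig c)).
  - rewrite <- !qval_pmul_neq0 by assumption; now rewrite e.
  - rewrite <- qval_pmul_neq0 by assumption; exact (qval_neq0 _ nz).
Qed.

Lemma quot_unique_roots_off_zero :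
  unique_roots_off_zero A -> unique_roots_off_zero (quot A I).
Proof.
  intros hA a b n hn e nz.
  assert (nz' : ppow b n <> pzero) by (rewrite <- e; exact nz).
  apply qcar_eq, (hA _ _ n hn).
  - rewrite <- !qval_ppow_neq0 by assumption; now rewrite e.
  - rewrite <- qval_ppow_neq0 by assumption; exact (qval_neq0 _ nz).
Qed.

End Quotient.

Section Isomorphism.
Variables A B : PMonoid.
Hypothesis iso : pm_iso A B.

Lemma pm_iso_cancellative_off_zero :
  cancellative_off_zero B -> cancellative_off_zero A.
Proof.
  destruct iso as (f & inj & _ & _ & f0 & fm).
  intros hB a b c e nz; apply inj, (hB _ _ (f c)).
  - now rewrite <- !fm, e.
  - rewrite <- fm, <- f0; intro h; exact (nz (inj _ _ h)).
Qed.

Lemma pm_iso_unique_roots_off_zero :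
  unique_roots_off_zero B -> unique_roots_off_zero A.
Proof.
  destruct iso as (f & inj & _ & f1 & f0 & fm).
  pose proof (pmul_hom_ppow _ _ f f1 fm) as fp.
  intros hB a b n hn e nz; apply inj, (hB _ _ n hn).
  - now rewrite <- !fp, e.
  - rewrite <- fp, <- f0; intro h; exact (nz (inj _ _ h)).
Qed.

End Isomorphism.

Lemma pc_cancellative_off_zero (A : PMonoid) : pc A -> cancellative_off_zero A.
Proof.
  intros (C & I & hC & iso).
  apply (pm_iso_cancellative_off_zero _ _ iso), quot_cancellative_off_zero.
  exact (cancellative_off_zero_of_cancellative _ hC).
Qed.

Lemma pctf_unique_roots_off_zero (A : PMonoid) : pctf A -> unique_roots_off_zero A.
Proof.
  intros (C & I & _ & hC & iso).
  apply (pm_iso_unique_roots_off_zero _ _ iso), quot_unique_roots_off_zero.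
  exact (unique_roots_off_zero_of_torsionfree _ hC).
Qed.

Section PrimeQuotient.
Variable A : PMonoid.
Variable p : Ideal A.
Hypothesis hp : prime_ideal p.

Lemma quot_prime_integral : integral (quot A p).
Proof.
  intros x y hx hy hxy.
  apply (proj2 hp _ _ (qval_notin _ _ x hx) (qval_notin _ _ y hy)), qproj_in.
  change (p (proj1_sig (pmul x y))); rewrite hxy; apply ideal_zero.
Qed.

Lemma qval_pmul (x y : quot A p) : x <> pzero -> y <> pzero ->
  proj1_sig (pmul x y) = pmul (proj1_sig x) (proj1_sig y).
Proof. intros hx hy; exact (qval_pmul_neq0 _ _ _ _ (quot_prime_integral _ _ hx hy)). Qed.

Lemma qval_ppow (x : quot A p) n : x <> pzero ->
  proj1_sig (ppow x n) = ppow (proj1_sig x) n.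
Proof.
  intro hx; apply qval_ppow_neq0, (ppow_neq0 _ quot_prime_integral), hx.
Qed.

Lemma quot_prime_normal : normal A -> normal (quot A p).
Proof.
  intros hnor [a b] [[ha hb] [n [hn [c [hc e]]]]]; simpl in ha, hb.
  rewrite gc_pow_pair, gc_eq_of_iff in e; simpl in e.
  assert (hbn : ppow b n <> pzero) by exact (ppow_neq0 _ quot_prime_integral _ _ hb).
  assert (lifted : ppow (proj1_sig a) n = pmul (proj1_sig c) (ppow (proj1_sig b) n)).
  { now rewrite <- (qval_ppow a), <- (qval_ppow b), <- qval_pmul, e. }
  destruct (hnor (proj1_sig a, proj1_sig b)) as [d [hd ed]].
  { split; [split; apply qval_neq0; assumption|].
    exists n; split; [exact hn|].
    exists (proj1_sig c); split; [apply qval_neq0; exact hc|].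
    rewrite gc_pow_pair, gc_eq_of_iff; exact lifted. }
  rewrite gc_eq_of_iff in ed; simpl in ed.
  assert (hd' : ~ p d).
  { intro h; apply (qval_notin _ _ a ha); rewrite ed, pmul_comm; now apply ideal_mul. }
  set (d' := exist _ d (or_intror hd') : quot A p).
  assert (hd'0 : d' <> pzero) by (intro h; apply hd, (proj2 (qval_eq0 _ _ d') h)).
  exists d'; split; [exact hd'0|].
  apply gc_eq_of_iff, qcar_eq; change (proj1_sig a = proj1_sig (pmul d' b)).
  rewrite qval_pmul by assumption; exact ed.
Qed.

End PrimeQuotient.

Theorem proposition1p5 (A : PMonoid) (p : Ideal A) :
  prime_ideal p -> pc A ->
  cancellative (quot A p) /\
  (pctf A -> completion_torsionfree (quot A p)) /\
  (cancellative A -> normal A -> cancellative (quot A p) /\ normal (quot A p)).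
Proof.
  intros hp hpc.
  assert (hint := quot_prime_integral A p hp).
  assert (canc : cancellative (quot A p)).
  { apply (cancellative_of_integral _ hint), quot_cancellative_off_zero.
    exact (pc_cancellative_off_zero _ hpc). }
  split; [exact canc|split].
  - intro htf; apply (completion_torsionfree_of_integral _ hint).
    exact (quot_unique_roots_off_zero _ _ (pctf_unique_roots_off_zero _ htf)).
  -
    intros _ hnor; exact (conj canc (quot_prime_normal A p hp hnor)).
Qed.
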